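(* Let $\mathcal M^\star\subset\mathbb R^D$ be a closed embedded submanifold with nearest-point projection $\pi^\star$, let $0<\tau<t_0$, and suppose for some $r<\mathrm{reach}(\mathcal M^\star)$ that $\hat s(x,t)=-\frac{x-\pi^\star(x)}{t}+\frac{e(x,t)}{t}$ for all $t\in[\tau,t_0]$, $x\in\mathcal T_r(\mathcal M^\star)$, with $\varepsilon:=\sup_{t\in[\tau,t_0],x\in\mathcal T_r(\mathcal M^\star)}\|e(x,t)\|$. Let $\bar X_t$ solve $\mathrm d\bar X_t=\frac12\hat s(\bar X_t,t_0-t)\,\mathrm dt$ for $t\in[0,t_0-\tau]$, set $a_0:=\frac12\operatorname{dist}^2(\bar X_0,\mathcal M^\star)$, and suppose $\sqrt{a_0}\ge\varepsilon$. Then \[\|\bar X_{t_0-\tau}-\bar X_0\|\le\operatorname{dist}(\bar X_0,\mathcal M^\star)+\mathcal O\!\Big(\varepsilon\ln\frac{t_0}{\tau}\Big).\]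
   Context: Reach: largest $r$ such that every point at distance $<r$ from $\mathcal M^\star$ has a unique nearest point. $\mathcal T_r(\mathcal M):=\{x:\operatorname{dist}(x,\mathcal M)<r\}$. *)

From HB Require Import structures.
From mathcomp Require Import all_boot all_order all_algebra.
From mathcomp Require Import all_classical all_reals all_analysis.
Set Implicit Arguments. Unset Strict Implicit. Unset Printing Implicit Defensive.
Import Order.TTheory GRing.Theory Num.Theory.
Import numFieldNormedType.Exports.
Local Open Scope classical_set_scope.
Local Open Scope ring_scope.

(* Euclidean norm on R^D (represented as row vectors 'rV[R]_D).  The
   topology/derivatives on 'rV_D come from the library's (equivalent) max norm. *)
Definition enorm {R : realType} {D : nat} (v : 'rV[R]_D) : R :=
  Num.sqrt (\sum_(i < D) v ord0 i ^+ 2).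

Definition dist_set {R : realType} {D : nat} (x : 'rV[R]_D) (M : set 'rV[R]_D) : R :=
  inf [set enorm (x - p) | p in M].

Definition tube {R : realType} {D : nat} (M : set 'rV[R]_D) (r : R) : set 'rV[R]_D :=
  [set x | dist_set x M < r].

Definition unique_nearest {R : realType} {D : nat} (M : set 'rV[R]_D) (r : R) : Prop :=
  forall x, dist_set x M < r ->
    exists! p, M p /\ enorm (x - p) = dist_set x M.

Definition reach {R : realType} {D : nat} (M : set 'rV[R]_D) : \bar R :=
  ereal_sup [set (r%:E)%E | r in [set r | unique_nearest M r]].

Fixpoint iter_partial {R : realType} {D m : nat} (s : seq 'I_D)
    (f : 'rV[R]_D -> 'rV[R]_m) : 'rV[R]_D -> 'rV[R]_m :=
  match s with
  | [::] => f
  | i :: s' => fun x => derive (iter_partial s' f) x (delta_mx 0 i)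
  end.

Definition smooth_on {R : realType} {D m : nat} (U : set 'rV[R]_D)
    (f : 'rV[R]_D -> 'rV[R]_m) : Prop :=
  forall s : seq 'I_D,
    (forall x, U x -> {for x, continuous (iter_partial s f)}) /\
    (forall (i : 'I_D) x, U x -> derivable (iter_partial s f) x (delta_mx 0 i)).

Definition embedded_submanifold {R : realType} {D : nat} (M : set 'rV[R]_D) : Prop :=
  exists d : nat, (d <= D)%N /\
    forall p, M p ->
      exists (U : set 'rV[R]_D) (F : 'rV[R]_D -> 'rV[R]_(D - d)),
        [/\ open U, U p, smooth_on U F,
            (forall x, U x -> forall w, exists v, derive F x v = w) &
            (forall x, U x -> (M x <-> F x = 0))].

From HB Require Import structures.
From mathcomp Require Import all_boot all_order all_algebra.
From mathcomp Require Import all_classical all_reals all_analysis.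
From mathcomp Require Import ring lra.
Import Order.TTheory GRing.Theory Num.Theory.
Import numFieldNormedType.Exports.
Local Open Scope classical_set_scope.
Local Open Scope ring_scope.

(* Write s = t0 - t and p = proj (X t).  Inside the tube the flow reads
   dX/dt = (e - (X - p)) / (2 s), so a step of length h is the relaxation
   X + c (e - (X - p)) with c = h / (2 s).  Hence max (dist (X t) M, eps) never
   increases, and the trajectory stays in the tube.  Moreover |X t - X 0| grows
   at rate at most (dist + eps) / (2 s) while dist decreases at rate at least
   (dist - eps) / (2 s), so their sum grows at rate at most eps / s, which is
   exactly absorbed by eps ln (t0 - t).  Thus
   |X t - X 0| + dist (X t) M + eps ln (t0 - t) is nonincreasing, and t = t0 - tau
   gives the bound with C = 1.  Since X is only differentiable in the interior,
   both monotonicity statements are proved by continuous induction from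
   one-sided derivative bounds. *)

Section ContinuousInduction.
Context {R : realType}.
Implicit Types a b t u : R.

Lemma real_induction a b (P : R -> Prop) :
  P a ->
  (forall t, a < t <= b -> (forall u, a <= u < t -> P u) -> P t) ->
  (forall t, a <= t < b -> (forall u, a <= u <= t -> P u) ->
     exists2 rho, 0 < rho & forall u, t < u <= b -> u < t + rho -> P u) ->
  forall u, a <= u <= b -> P u.
Proof.
move=> Pa closedP extP.
have [ab|ba] := lerP a b; last by move=> u /andP[au ub]; lra.
pose S := [set t | a <= t <= b /\ forall u, a <= u <= t -> P u].
have Sa : S a.
  split; first by rewrite lexx ab.
  by move=> u /andP[au ua]; have -> : u = a by apply/eqP; rewrite eq_le ua au.
have supS : has_sup S by split; [exists a | exists b => t [/andP[_ ->]]].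
set s := sup S.
have as_ : a <= s by exact: sup_upper_bound.
have sb : s <= b by apply: ge_sup; [exists a | move=> t [/andP[_ ->]]].
have P_below : forall u, a <= u < s -> P u.
  move=> u /andP[au us].
  have [t [_ Pt]] : exists2 t, S t & s - (s - u) < t.
    by apply: sup_adherent => //; rewrite subr_gt0.
  by rewrite subKr => ut; apply: Pt; rewrite au ltW.
have P_upto : forall u, a <= u <= s -> P u.
  move=> u /andP[au us]; have [lt_us|] := ltrP u s; first by apply: P_below; rewrite au.
  move=> su; have -> : u = s by apply/eqP; rewrite eq_le us su.
  have [lt_as|] := ltrP a s; first by apply: closedP; rewrite ?lt_as ?sb.
  by move=> sa; have -> : s = a by apply/eqP; rewrite eq_le sa as_.
have <- : s = b.
  apply/eqP; rewrite eq_le sb leNgt; apply/negP => lt_sb.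
  have [rho rho0 Pext] := extP s ltac:(by rewrite as_ lt_sb) P_upto.
  pose t := Num.min b (s + rho / 2).
  have St : S t.
    split; first by rewrite ge_min lexx andbT le_min ab; lra.
    move=> u /andP[au ut]; have [us|su] := lerP u s; first by apply: P_upto; rewrite au.
    by move: ut; rewrite le_min => /andP[ub ?]; apply: Pext; rewrite ?su ?ub //; lra.
  have : t <= s by exact: sup_upper_bound.
  by rewrite ge_min; lra.
exact: P_upto.
Qed.

Definition no_upward_jumps a b (f : R -> R) :=
  forall t, a <= t <= b -> forall eta, 0 < eta -> exists2 rho, 0 < rho &
    forall u, a <= u <= b -> `|u - t| < rho ->
      (u <= t -> f t <= f u + eta) /\ (t <= u -> f u <= f t + eta).

Lemma le_slope_of_right_steps {a b d} {f : R -> R} :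
  0 < d -> no_upward_jumps a b f ->
  (forall t, a < t < b -> (forall u, a <= u <= t -> f u <= f a + d * (u - a) + d) ->
     exists2 rho, 0 < rho & forall h, 0 < h < rho -> f (t + h) <= f t + d * h) ->
  forall u, a <= u <= b -> f u <= f a + d * (u - a) + d.
Proof.
move=> d0 jumpsf stepf; apply: real_induction.
- by rewrite subrr mulr0 addr0 lerDl ltW.
- move=> t /andP[lt_at tb] below; apply/ler_addgt0Pr => eta eta0.
  have [rho rho0 /(_ (Num.max a (t - rho / 2)))] := jumpsf t ltac:(rewrite tb; lra) eta eta0.
  set u := Num.max a (t - rho / 2).
  have au : a <= u by rewrite le_max lexx.
  have ut : u < t by rewrite gt_max lt_at /=; lra.
  have tu : `|u - t| < rho.
    have : t - rho / 2 <= u by rewrite le_max lexx orbT.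
    by rewrite ltr0_norm ?opprB ?subr_lt0 //; lra.
  case/(_ ltac:(rewrite au; lra) tu) => /(_ (ltW ut)) + _.
  have := below u ltac:(by rewrite au ut).
  have : d * u <= d * t by rewrite ler_pM2l // ltW.
  rewrite !mulrBr; lra.
- move=> t /andP[le_at tb] upto; have [lt_at|] := ltrP a t.
    have [rho rho0 stept] := stepf t ltac:(by rewrite lt_at tb) upto.
    exists rho => // u /andP[tu ub] urho.
    have := stept (u - t) ltac:(lra); rewrite addrCA subrr addr0.
    have := upto t ltac:(by rewrite lexx ltW).
    rewrite !mulrBr; lra.
  move=> ta; have eq_ta : t = a by apply/eqP; rewrite eq_le ta le_at.
  subst t.
  have [rho rho0 /= jumpa] := jumpsf a ltac:(by rewrite lexx ltW) d d0.
  exists rho => // u /andP[au ub] urho.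
  have [_ /(_ (ltW au))] := jumpa u ltac:(rewrite ub; lra) ltac:(rewrite gtr0_norm; lra).
  have : 0 <= d * (u - a) by rewrite mulr_ge0 //; lra.
  lra.
Qed.

(* The step at t may use the slope bound on [a, t] being proved; this is what
   keeps the trajectory in the tube in flow_dist_le. *)
Lemma le_start_of_right_steps {a b d0} {f : R -> R} :
  0 < d0 -> no_upward_jumps a b f ->
  (forall d, 0 < d < d0 -> forall t, a < t < b ->
     (forall u, a <= u <= t -> f u <= f a + d * (u - a) + d) ->
     exists2 rho, 0 < rho & forall h, 0 < h < rho -> f (t + h) <= f t + d * h) ->
  forall u, a <= u <= b -> f u <= f a.
Proof.
move=> d00 jumpsf stepf u /andP[au ub]; apply/ler_addgt0Pr => eta eta0.
pose d := Num.min (d0 / 2) (eta / (b - a + 1)).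
have d_gt0 : 0 < d by rewrite lt_min; apply/andP; split; [lra | apply: divr_gt0; lra].
have d_lt : d < d0 by rewrite gt_min; apply/orP; left; lra.
have := le_slope_of_right_steps d_gt0 jumpsf (stepf d ltac:(by rewrite d_gt0)) u.
have : d * (b - a + 1) <= eta by rewrite -ler_pdivlMr ?ge_min ?lexx ?orbT //; lra.
have : d * (u - a) <= d * (b - a) by rewrite ler_pM2l //; lra.
rewrite au ub !mulrDr mulr1; lra.
Qed.

End ContinuousInduction.

Section EuclideanNorm.
Context {R : realType} {D : nat}.
Implicit Types u v w x y p e : 'rV[R]_D.

Lemma enorm_ge0 v : 0 <= enorm v.
Proof. exact: sqrtr_ge0. Qed.

Lemma enorm_sqr v : enorm v ^+ 2 = \sum_(i < D) v ord0 i ^+ 2.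
Proof. by rewrite sqr_sqrtr // sumr_ge0 // => i _; rewrite sqr_ge0. Qed.

Lemma enorm0 : enorm (0 : 'rV[R]_D) = 0.
Proof. by rewrite /enorm big1 ?sqrtr0 // => i _; rewrite mxE expr0n. Qed.

Lemma enormZ c v : enorm (c *: v) = `|c| * enorm v.
Proof.
rewrite /enorm -sqrtr_sqr -sqrtrM ?sqr_ge0 // mulr_sumr.
by congr Num.sqrt; apply: eq_bigr => i _; rewrite mxE exprMn.
Qed.

Lemma enormN v : enorm (- v) = enorm v.
Proof. by rewrite -scaleN1r enormZ normrN1 mul1r. Qed.

Lemma enorm_distrC u v : enorm (u - v) = enorm (v - u).
Proof. by rewrite -enormN opprB. Qed.

Lemma lagrange_identity u v :
  \sum_(i < D) \sum_(j < D) (u ord0 i * v ord0 j - u ord0 j * v ord0 i) ^+ 2 =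
  (enorm u ^+ 2 * enorm v ^+ 2 - (\sum_(i < D) u ord0 i * v ord0 i) ^+ 2) *+ 2.
Proof.
transitivity (\sum_(i < D) \sum_(j < D)
  (u ord0 i ^+ 2 * v ord0 j ^+ 2 + v ord0 i ^+ 2 * u ord0 j ^+ 2 -
   (u ord0 i * v ord0 i * (u ord0 j * v ord0 j)) *+ 2)).
  by apply: eq_bigr => i _; apply: eq_bigr => j _; ring.
under eq_bigr do rewrite sumrB big_split /= sumrMnl.
rewrite sumrB big_split /= sumrMnl !enorm_sqr expr2 !big_distrlr /= mulrnBl mulr2n.
congr (_ + _ - _); rewrite exchange_big /=.
by apply: eq_bigr => i _; apply: eq_bigr => j _; rewrite mulrC.
Qed.

Lemma dot_le_enormM u v : \sum_(i < D) u ord0 i * v ord0 i <= enorm u * enorm v.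
Proof.
set s := \sum_(i < D) _.
have sqr_le : `|s| ^+ 2 <= (enorm u * enorm v) ^+ 2.
  have := lagrange_identity u v; rewrite real_normK ?num_real // exprMn.
  have : 0 <= \sum_(i < D) \sum_(j < D) (u ord0 i * v ord0 j - u ord0 j * v ord0 i) ^+ 2.
    by do 2 apply: sumr_ge0 => ? _; rewrite sqr_ge0.
  by move=> /[swap] ->; rewrite pmulrn_lge0 // subr_ge0.
apply: (le_trans (ler_norm s)).
by rewrite -(ler_pXn2r (_ : (0 < 2)%N)) ?nnegrE ?mulr_ge0 ?enorm_ge0.
Qed.

Lemma enormD u v : enorm (u + v) <= enorm u + enorm v.
Proof.
rewrite -(ler_pXn2r (_ : (0 < 2)%N)) ?nnegrE ?addr_ge0 ?enorm_ge0 // enorm_sqr.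
have -> : \sum_(i < D) (u + v) ord0 i ^+ 2 = enorm u ^+ 2 + enorm v ^+ 2 +
    (\sum_(i < D) u ord0 i * v ord0 i) *+ 2.
  rewrite !enorm_sqr -sumrMnl -!big_split /=.
  by apply: eq_bigr => i _; rewrite mxE; ring.
have := dot_le_enormM u v; lra.
Qed.

Lemma enorm_distD u v w : enorm (v - w) <= enorm (v - u) + enorm (u - w).
Proof. by rewrite (_ : v - w = (v - u) + (u - w)) ?enormD // addrA subrK. Qed.

Lemma enorm_le_norm v : enorm v <= D%:R * `|v|.
Proof.
rewrite -(ler_pXn2r (_ : (0 < 2)%N)) ?nnegrE ?mulr_ge0 ?enorm_ge0 // enorm_sqr.
apply: (@le_trans _ _ (\sum_(i < D) `|v| ^+ 2)).
  apply: ler_sum => i _; rewrite -real_normK ?num_real // lerXn2r ?nnegrE //.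
  by rewrite [`|v|]mx_normrE (le_bigmax _ _ (ord0, i)).
rewrite sumr_const card_ord exprMn -[_ *+ D]mulr_natl ler_wpM2r ?sqr_ge0 //.
by rewrite expr2 -natrM ler_nat; case: D => // n; rewrite leq_pmulr.
Qed.

Lemma enorm_lt_of_norm v c : `|v| < c / (D%:R + 1) -> enorm v < c.
Proof.
move=> vc; rewrite (le_lt_trans (enorm_le_norm v)) //.
rewrite (@le_lt_trans _ _ ((D%:R + 1) * `|v|)) ?ler_wpM2r ?normr_ge0 ?lerDl //.
by rewrite -ltr_pdivlMl ?ltr_wpDl // mulrC.
Qed.

Lemma dist_set_le {M : set 'rV[R]_D} {p} x : M p -> dist_set x M <= enorm (x - p).
Proof. by move=> Mp; apply: ge_inf; [exists 0 => _ [q _ <-]; apply: enorm_ge0 | exists p]. Qed.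

Lemma dist_set_ge0 {M : set 'rV[R]_D} x : M !=set0 -> 0 <= dist_set x M.
Proof.
move=> [p Mp]; apply: lb_le_inf; first by exists (enorm (x - p)), p.
by move=> _ [q _ <-]; apply: enorm_ge0.
Qed.

Lemma dist_set_leD {M : set 'rV[R]_D} x y : M !=set0 ->
  dist_set x M <= dist_set y M + enorm (x - y).
Proof.
move=> [p Mp]; rewrite -lerBlDr; apply: lb_le_inf; first by exists (enorm (y - p)), p.
move=> _ [q Mq <-]; rewrite lerBlDr (le_trans (dist_set_le x Mq)) //.
by rewrite [X in _ <= X]addrC enorm_distD.
Qed.

Lemma is_derive_enorm_approx {X : R -> 'rV[R]_D} {t : R} {v} : is_derive t 1 X v ->
  forall d, 0 < d -> exists2 rho, 0 < rho &
    forall h, 0 < h < rho -> enorm (X (t + h) - X t - h *: v) <= d * h.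
Proof.
move=> [dX <-] d d0.
have quot_cvg : (fun h : R => h^-1 *: ((X \o shift t) (h *: 1) - X t)) @ 0^' -->
    'D_1 X t := dX.
have /(cvgr_dist_lt _ _ quot_cvg) : 0 < d / (D%:R + 1) by rewrite divr_gt0 ?ltr_wpDl.
rewrite near_withinE => /nbhs_ballP[rho rho0 near_t].
exists rho => // h /andP[h0 hrho].
have /near_t /(_ (lt0r_neq0 h0)) : ball 0 rho h by rewrite /ball /= sub0r normrN gtr0_norm.
rewrite /shift [h *: 1]/(_ *: _) /= mulr1 [h + t]addrC => /enorm_lt_of_norm /ltW quot.
have -> : X (t + h) - X t - h *: 'D_1 X t =
    - (h *: ('D_1 X t - h^-1 *: (X (t + h) - X t))).
  by rewrite scalerBr scalerA mulfV ?lt0r_neq0 // scale1r opprB.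
by rewrite enormN enormZ gtr0_norm // mulrC ler_pM2r.
Qed.

Lemma within_continuous_enorm_approx {A : set R} {X : R -> 'rV[R]_D} :
  {within A, continuous X} -> forall t : R, A t -> forall eta, 0 < eta ->
  exists2 rho, 0 < rho & forall s, A s -> `|s - t| < rho -> enorm (X s - X t) < eta.
Proof.
move=> /subspace_continuousP contX t At eta eta0.
have /(cvgr_dist_lt _ _ (contX t At)) : 0 < eta / (D%:R + 1) by rewrite divr_gt0 ?ltr_wpDl.
rewrite near_withinE => /(@nbhs_ballP R R^o t _)[rho rho0 near_t].
exists rho => // s As st.
have /(_ As) /= := near_t s ltac:(by rewrite /ball /= distrC).
by rewrite -normrN opprB => /enorm_lt_of_norm.
Qed.

Lemma relax_step_dist {x p e w} {c eps d : R} :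
  0 <= c <= 1 -> enorm e <= eps -> enorm (w - x - c *: (e - (x - p))) <= d ->
  enorm (w - p) <= (1 - c) * enorm (x - p) + c * eps + d.
Proof.
move=> /andP[c0 c1] e_eps werr.
have -> : w - p = (w - x - c *: (e - (x - p))) + ((1 - c) *: (x - p) + c *: e).
  by apply/rowP => i; rewrite !mxE; ring.
rewrite addrC (le_trans (enormD _ _)) // lerD // (le_trans (enormD _ _)) //.
by rewrite !enormZ !ger0_norm ?subr_ge0 // lerD // ler_wpM2l.
Qed.

Lemma relax_step_displacement {x p e w} {c eps d : R} :
  0 <= c -> enorm e <= eps -> enorm (w - x - c *: (e - (x - p))) <= d ->
  enorm (w - x) <= c * (enorm (x - p) + eps) + d.
Proof.
move=> c0 e_eps werr.
rewrite -[w - x](subrK (c *: (e - (x - p)))) addrC (le_trans (enormD _ _)) // lerD //.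
rewrite enormZ ger0_norm // ler_wpM2l // addrC (le_trans (enormD _ _)) //.
by rewrite enormN lerD.
Qed.

End EuclideanNorm.

Lemma ln_subr_le {R : realType} (s h : R) : 0 < s -> h < s -> ln (s - h) <= ln s - h / s.
Proof.
move=> s0 hs; have hs1 : -1 < - (h / s) by rewrite ltrN2 ltr_pdivrMr ?mul1r.
have -> : s - h = s * (1 + - (h / s)).
  by rewrite mulrDr mulr1 mulrN mulrCA divff ?mulr1 // gt_eqF.
by rewrite lnM ?posrE ?lerD2l ?le_ln1Dx //; lra.
Qed.

Lemma no_upward_jumps_of_enorm {R : realType} {D : nat} {a b K : R} {f : R -> R}
    {X : R -> 'rV[R]_D} :
  0 < K -> {within [set t | a <= t <= b], continuous X} ->
  (forall u v, a <= u <= b -> a <= v <= b -> u <= v ->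
     f v <= f u + K * enorm (X v - X u)) ->
  no_upward_jumps a b f.
Proof.
move=> K0 contX f_le t tab eta eta0.
have [rho rho0 Xnear] := within_continuous_enorm_approx contX t tab _ (divr_gt0 eta0 K0).
exists rho => // u uab ut.
have Xut : K * enorm (X u - X t) <= eta by rewrite mulrC -ler_pdivlMr // ltW ?Xnear.
split=> [le_ut | le_tu].
  by rewrite (le_trans (f_le u t uab tab le_ut)) // lerD2l enorm_distrC.
by rewrite (le_trans (f_le t u tab uab le_tu)) // lerD2l.
Qed.

Section ProbabilityFlowODE.
Context {R : realType} {D : nat} (M : set 'rV[R]_D) (proj : 'rV[R]_D -> 'rV[R]_D).
Context (tau t0 r eps : R) (shat e : 'rV[R]_D -> R -> 'rV[R]_D) (X : R -> 'rV[R]_D).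
Hypothesis proj_nearest :
  forall x, tube M r x -> M (proj x) /\ enorm (x - proj x) = dist_set x M.
Hypothesis tau_gt0 : 0 < tau.
Hypothesis tau_lt_t0 : tau < t0.
Hypothesis shatE : forall t x, tau <= t <= t0 -> tube M r x ->
  shat x t = - (t^-1 *: (x - proj x)) + t^-1 *: e x t.
Hypothesis e_le : forall t x, tau <= t <= t0 -> tube M r x -> enorm (e x t) <= eps.
Hypothesis X_cont : {within [set t | 0 <= t <= t0 - tau], continuous X}.
Hypothesis X_deriv : forall t, 0 < t < t0 - tau ->
  is_derive t 1 X (2^-1 *: shat (X t) (t0 - t)).
Hypothesis X0_tube : tube M r (X 0).
Hypothesis eps_le_dist0 : eps <= dist_set (X 0) M.

Local Notation T := (t0 - tau).

Let M_neq0 : M !=set0.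
Proof. by exists (proj (X 0)); case: (proj_nearest _ X0_tube). Qed.

Let eps_ge0 : 0 <= eps.
Proof.
by rewrite (le_trans (enorm_ge0 (e (X 0) tau))) // e_le // lexx ltW.
Qed.

Lemma flow_step t : 0 < t < T -> dist_set (X t) M < r ->
  forall d, 0 < d -> exists2 rho, 0 < rho & forall h, 0 < h < rho ->
  [/\ h < t0 - t,
      dist_set (X (t + h)) M <= (1 - h / (2 * (t0 - t))) * dist_set (X t) M
                                + h / (2 * (t0 - t)) * eps + d * h &
      enorm (X (t + h) - X t) <= h / (2 * (t0 - t)) * (dist_set (X t) M + eps) + d * h].
Proof.
move=> /andP[t_gt0 t_ltT] Xt_tube d d0; set s := t0 - t.
have s_range : tau <= s <= t0 by apply/andP; split; rewrite /s; lra.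
have s_gt0 : 0 < s by rewrite (lt_le_trans tau_gt0); case/andP: s_range.
have [proj_in proj_dist] := proj_nearest _ Xt_tube.
have := X_deriv t ltac:(by rewrite t_gt0); rewrite -/s shatE // => dX.
have [rho rho0 X_approx] := is_derive_enorm_approx dX d d0.
exists (Num.min rho s) => [|h /andP[h0]]; first by rewrite lt_min rho0.
rewrite lt_min => /andP[h_rho h_s]; set c := h / (2 * s).
have c01 : 0 <= c <= 1 by rewrite divr_ge0 ?ler_pdivrMr /=; lra.
have step : enorm (X (t + h) - X t - c *: (e (X t) s - (X t - proj (X t)))) <= d * h.
  have -> : c *: (e (X t) s - (X t - proj (X t))) =
      h *: (2^-1 *: (- (s^-1 *: (X t - proj (X t))) + s^-1 *: e (X t) s)).
    by apply/rowP => i; rewrite !mxE /c invfM; field; lra.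
  by apply: X_approx; rewrite h0.
have e_eps := e_le _ _ s_range Xt_tube.
split => //.
  rewrite (le_trans (dist_set_le _ proj_in)) // -proj_dist.
  exact: relax_step_dist c01 e_eps step.
by rewrite -proj_dist; apply: relax_step_displacement e_eps step; case/andP: c01.
Qed.

Lemma flow_dist_le u : 0 <= u <= T -> Num.max (dist_set (X u) M) eps <= dist_set (X 0) M.
Proof.
pose f t := Num.max (dist_set (X t) M) eps.
have f0 : f 0 = dist_set (X 0) M by rewrite /f max_l.
have T1_gt0 : 0 < T + 1 by rewrite ltr_wpDl // subr_ge0 ltW.
have margin : 0 < (r - dist_set (X 0) M) / (T + 1) by rewrite divr_gt0 ?subr_gt0.
rewrite -f0; apply: (le_start_of_right_steps margin).
  apply: (no_upward_jumps_of_enorm ltr01 X_cont) => v w _ _ _.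
  by rewrite mul1r /f addr_maxl le_max2 ?dist_set_leD // lerDl enorm_ge0.
move=> d /andP[d0 d_lt] t /andP[t_gt0 t_ltT] below.
have f_t : f t <= dist_set (X 0) M + d * t + d.
  by have := below t; rewrite subr0 -f0 lexx ltW //; apply.
have dist_le_f : dist_set (X t) M <= f t by rewrite le_max lexx.
have eps_le_f : eps <= f t by rewrite le_max lexx orbT.
have Xt_tube : dist_set (X t) M < r.
  move: d_lt; rewrite ltr_pdivlMr // => d_lt.
  have : d * t <= d * T by rewrite ler_pM2l // ltW.
  rewrite mulrDr mulr1 in d_lt; lra.
have [rho rho0 step] := flow_step t ltac:(by rewrite t_gt0) Xt_tube d d0.
exists rho => // h h_range; have [h_s dist_step _] := step h h_range.
set c := h / (2 * (t0 - t)) in dist_step.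
have c01 : 0 <= c <= 1.
  by rewrite divr_ge0 ?ler_pdivrMr /=; case/andP: h_range; lra.
have dh_ge0 : 0 <= d * h by rewrite mulr_ge0 //; case/andP: h_range; lra.
rewrite {1}/f ge_max (ler_wpDr dh_ge0 eps_le_f) andbT (le_trans dist_step) // lerD2r.
case/andP: c01 => c0 c1.
have : (1 - c) * dist_set (X t) M <= (1 - c) * f t by rewrite ler_wpM2l ?subr_ge0.
have : c * eps <= c * f t by rewrite ler_wpM2l.
lra.
Qed.

Lemma flow_in_tube u : 0 <= u <= T -> dist_set (X u) M < r.
Proof.
move=> /flow_dist_le; rewrite ge_max => /andP[dist_le _].
exact: le_lt_trans dist_le X0_tube.
Qed.

Lemma flow_lyapunov_le u : 0 <= u <= T ->
  enorm (X u - X 0) + dist_set (X u) M + eps * ln (t0 - u) <=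
  dist_set (X 0) M + eps * ln t0.
Proof.
pose f t := enorm (X t - X 0) + dist_set (X t) M + eps * ln (t0 - t).
have f0 : f 0 = dist_set (X 0) M + eps * ln t0 by rewrite /f subrr enorm0 add0r subr0.
have T_lt_t0 : T < t0 by rewrite gtrBl.
rewrite -f0; apply: (le_start_of_right_steps ltr01).
  apply: (@no_upward_jumps_of_enorm _ _ _ _ 2 _ _ _ X_cont) => // v w /andP[_ vT] /andP[_ wT] vw.
  have := enorm_distD (X v) (X w) (X 0).
  have := dist_set_leD (X w) (X v) M_neq0.
  have : eps * ln (t0 - w) <= eps * ln (t0 - v).
    by rewrite ler_wpM2l // ler_ln ?posrE ?lerB //; lra.
  rewrite /f; lra.
move=> d /andP[d0 _] t /andP[t_gt0 t_ltT] _.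
have t_range : 0 <= t <= T by rewrite !ltW.
have [rho rho0 step] := flow_step t ltac:(by rewrite t_gt0) (flow_in_tube t t_range)
  (d / 2) ltac:(by rewrite divr_gt0).
exists rho => // h h_range; have [h_s dist_step move_step] := step h h_range.
have ln_step : ln (t0 - (t + h)) <= ln (t0 - t) - h / (t0 - t).
  by rewrite opprD addrA ln_subr_le // subr_gt0; lra.
have := enorm_distD (X t) (X (t + h)) (X 0).
have : eps * ln (t0 - (t + h)) <= eps * (ln (t0 - t) - h / (t0 - t)) by rewrite ler_wpM2l.
have -> : h / (t0 - t) = 2 * (h / (2 * (t0 - t))) by field; lra.
rewrite /f; lra.
Qed.

Lemma flow_displacement_le : enorm (X T - X 0) <= dist_set (X 0) M + eps * ln (t0 / tau).
Proof.
have := flow_lyapunov_le T ltac:(by rewrite lexx subr_ge0 ltW).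
have -> : t0 - T = tau by rewrite opprB addrC subrK.
rewrite ln_div ?posrE ?tau_gt0 ?(lt_trans tau_gt0 tau_lt_t0) //.
have := dist_set_ge0 (X T) M_neq0.
lra.
Qed.

End ProbabilityFlowODE.

Lemma sqrt_half_sqr_le {R : realType} (x : R) : 0 <= x -> Num.sqrt (2^-1 * x ^+ 2) <= x.
Proof.
move=> x0; rewrite -{2}(ger0_norm x0) -sqrtr_sqr ler_wsqrtr // ler_piMl ?sqr_ge0 //.
by rewrite invf_le1 // ler1n.
Qed.

Theorem lemmaG1 (R : realType) :
  exists C : R,
  forall (D : nat) (M : set 'rV[R]_D) (proj : 'rV[R]_D -> 'rV[R]_D)
    (tau t0 r eps : R) (shat e : 'rV[R]_D -> R -> 'rV[R]_D) (X : R -> 'rV[R]_D),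
  closed M -> embedded_submanifold M ->
  (forall x, tube M r x -> M (proj x) /\ enorm (x - proj x) = dist_set x M) ->
  0 < tau -> tau < t0 ->
  (r%:E < reach M)%E ->
  (forall t x, tau <= t <= t0 -> tube M r x ->
     shat x t = - (t^-1 *: (x - proj x)) + t^-1 *: e x t) ->
  (forall t x, tau <= t <= t0 -> tube M r x -> enorm (e x t) <= eps) ->
  (forall b, (forall t x, tau <= t <= t0 -> tube M r x -> enorm (e x t) <= b) ->
     eps <= b) ->
  {within [set t | 0 <= t <= t0 - tau], continuous X} ->
  (forall t, 0 < t < t0 - tau ->
     is_derive t 1 X (2^-1 *: shat (X t) (t0 - t))) ->
  tube M r (X 0) ->
  eps <= Num.sqrt (2^-1 * dist_set (X 0) M ^+ 2) ->
  enorm (X (t0 - tau) - X 0) <= dist_set (X 0) M + C * (eps * ln (t0 / tau)).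
Proof.
exists 1 => D M proj tau t0 r eps shat e X _ _ proj_nearest tau_gt0 tau_lt_t0 _
  shatE e_le _ X_cont X_deriv X0_tube eps_le.
have M_neq0 : M !=set0 by exists (proj (X 0)); case: (proj_nearest _ X0_tube).
have eps_le_dist0 : eps <= dist_set (X 0) M.
  by rewrite (le_trans eps_le) // sqrt_half_sqr_le // dist_set_ge0.
by rewrite mul1r (@flow_displacement_le _ _ M proj tau t0 r eps shat e X).
Qed.
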